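(* Let $G$ be a strongly connected directed multigraph with a designated set of ordinary vertices such that every two distinct ordinary vertices are $(k+1)$-edge-connected, and let $s$ be a fixed ordinary vertex. Let $u$ and $w$ be two ordinary vertices such that $M(u)\neq M(w)$. Then either $M(u)\neq\bot$ and $w\notin M(u)$, or $M(w)\neq\bot$ and $u\notin M(w)$.
   Context: For a vertex set $S$, $\mathit{out}(S)$ is the number of edges leaving $S$; $S$ is a $j$-out set if $\mathit{out}(S)=j$. For vertices $x,y$, $\lambda(x,y)$ is the minimum of $\mathit{out}(S)$ over vertex sets $S$ with $x\in S$, $y\notin S$. Two vertices $x,y$ are $j$-edge-connected if $\lambda(x,y)\ge j$ and $\lambda(y,x)\ge j$. For a vertex $v$ with $\lambda(v,s)\ge k+1$: if there is a $(k+1)$-out set $S$ with $v\in S$, $s\notin S$, then $M(v)$ denotes the inclusion-wise minimum such $(k+1)$-out set; otherwise $M(v)=\bot$. *)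

From mathcomp Require Import all_boot.
Set Implicit Arguments. Unset Strict Implicit. Unset Printing Implicit Defensive.

(* A directed multigraph on a finite vertex type V is given by its edge
   multiplicity function m : m x y = number of edges from x to y. *)
Section Graph.
Variables (V : finType) (m : V -> V -> nat).

Definition out (S : {set V}) : nat :=
  \sum_(x in S) \sum_(y in ~: S) m x y.

Definition adj : rel V := fun x y => 0 < m x y.

Definition strongly_connected : Prop := forall x y : V, connect adj x y.

(* lambda(x,y) >= j, i.e. min { out S | x in S, y notin S } >= j *)
Definition lambda_ge (x y : V) (j : nat) : Prop :=
  forall S : {set V}, x \in S -> y \notin S -> j <= out S.

Definition edge_conn (x y : V) (j : nat) : Prop :=
  lambda_ge x y j /\ lambda_ge y x j.

Definition Mcands (k : nat) (s v : V) : {set {set V}} :=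
  [set S : {set V} | (v \in S) && (s \notin S) && (out S == k.+1)].

(* M(v): the inclusion-wise minimum such set, or None (= bot) *)
Definition M (k : nat) (s v : V) : option {set V} :=
  [pick S in Mcands k s v | [forall T in Mcands k s v, S \subset T]].

End Graph.

(** Edge cuts are submodular: out(A ∩ B) + out(A ∪ B) <= out(A) + out(B).  When
    λ(v, s) >= k+1, two (k+1)-out sets separating v from s therefore have an
    intersection that is again such a set, so the family of these sets is
    closed under intersection and M(v) exists as soon as the family is
    non-empty.  If M(u) = S contains w, then S is also a candidate for w, so
    M(w) exists and lies inside S; if moreover u ∈ M(w), the same argument
    gives M(u) ⊆ M(w), hence M(u) = M(w). *)
From mathcomp Require Import all_boot.
From mathcomp Require Import zify.

Set Implicit Arguments.
Unset Strict Implicit.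
Unset Printing Implicit Defensive.

Section Submodularity.
Variables (V : finType) (m : V -> V -> nat).

Lemma outE (S : {set V}) :
  out m S = \sum_x \sum_y ((x \in S) && (y \notin S)) * m x y.
Proof.
rewrite /out big_mkcond; apply: eq_bigr => x _.
case: (boolP (x \in S)) => xS /=.
  rewrite big_mkcond; apply: eq_bigr => y _; rewrite in_setC.
  by case: (y \in S); rewrite ?mul1n ?mul0n.
by rewrite big1 // => y _; rewrite mul0n.
Qed.

Lemma out_submodular (A B : {set V}) :
  out m (A :&: B) + out m (A :|: B) <= out m A + out m B.
Proof.
rewrite !outE -!big_split /=; apply: leq_sum => x _.
rewrite -!big_split /=; apply: leq_sum => y _; rewrite !inE.
by case: (x \in A); case: (x \in B); case: (y \in A); case: (y \in B) => /=; lia.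
Qed.

End Submodularity.

Section MinimumCut.
Variables (V : finType) (m : V -> V -> nat) (k : nat) (s : V).

Notation cands := (Mcands m k s).

Lemma McandsP v (S : {set V}) :
  reflect [/\ v \in S, s \notin S & out m S = k.+1] (S \in cands v).
Proof. by rewrite inE -andbA; apply: (iffP and3P) => -[? ? /eqP]. Qed.

Lemma Mcands_mem v w (S : {set V}) : w \in S -> S \in cands v -> S \in cands w.
Proof. by move=> wS /McandsP[_ sS outS]; apply/McandsP. Qed.

Lemma Mcands_setI v A B : lambda_ge m v s k.+1 ->
  A \in cands v -> B \in cands v -> A :&: B \in cands v.
Proof.
move=> lam /McandsP[vA sA outA] /McandsP[vB sB outB].
have outI : k.+1 <= out m (A :&: B) by apply: lam; rewrite !inE ?vA ?vB ?negb_and ?sA.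
have outU : k.+1 <= out m (A :|: B) by apply: lam; rewrite !inE ?vA ?negb_or ?sA ?sB.
have := out_submodular m A B; rewrite outA outB => sub.
by apply/McandsP; split; rewrite ?inE ?vA ?vB ?negb_and ?sA //; lia.
Qed.

Lemma M_Some v (S : {set V}) :
  M m k s v = Some S ->
  S \in cands v /\ {in cands v, forall T : {set V}, S \subset T}.
Proof. by rewrite /M; case: pickP => // S' /andP[SC /forall_inP Smin] [<-]. Qed.

Lemma M_None v (S : {set V}) :
  lambda_ge m v s k.+1 -> S \in cands v -> M m k s v <> None.
Proof.
move=> lam SC; have [T0 T0C T0min] := arg_minnP (fun X : {set V} => #|X|) SC.
have {}T0C : T0 \in cands v := T0C.
rewrite /M; case: pickP => // /(_ T0) /negbT/negP; rewrite T0C /= => notmin _.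
apply: notmin; apply/forall_inP => T TC.
have T0I : T0 :&: T \in cands v by exact: Mcands_setI.
have -> : T0 = T0 :&: T.
  by apply/eqP; rewrite eq_sym eqEcard subsetIl T0min.
exact: subsetIr.
Qed.

Lemma M_Some_mem u w S : lambda_ge m w s k.+1 ->
  M m k s u = Some S -> w \in S ->
  exists2 S', M m k s w = Some S' & S' \subset S.
Proof.
move=> lam /M_Some[SC _] wS; have SCw := Mcands_mem wS SC.
case Ew: (M m k s w) => [S'|]; last by have := M_None lam SCw.
by exists S' => //; have [_ ->] := M_Some Ew.
Qed.

Lemma M_separate u w S :
  lambda_ge m u s k.+1 -> lambda_ge m w s k.+1 ->
  M m k s u = Some S -> M m k s u <> M m k s w ->
  w \notin S \/ exists2 S', M m k s w = Some S' & u \notin S'.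
Proof.
move=> lamu lamw Eu neq.
case: (boolP (w \in S)) => wS; [right | by left].
have [S' Ew S'S] := M_Some_mem lamw Eu wS.
exists S' => //; apply/negP => uS'.
have [T Eu' TS'] := M_Some_mem lamu Ew uS'.
have TS : T = S by move: Eu'; rewrite Eu => -[].
by apply: neq; rewrite Eu Ew; congr Some; apply/eqP; rewrite eqEsubset -{1}TS TS' S'S.
Qed.

End MinimumCut.

Theorem mainTheorem4 (V : finType) (m : V -> V -> nat) (O : {set V}) (k : nat)
  (s u w : V) :
  strongly_connected m ->
  (forall x y, x \in O -> y \in O -> x != y -> edge_conn m x y k.+1) ->
  s \in O -> u \in O -> w \in O ->
  M m k s u <> M m k s w ->
  (exists S, M m k s u = Some S /\ w \notin S) \/
  (exists S, M m k s w = Some S /\ u \notin S).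
Proof.
move=> _ conn sO uO wO neq.
(* For v = s the bound holds vacuously: no set contains s and avoids it. *)
have lam v : v \in O -> lambda_ge m v s k.+1.
  move=> vO; case: (eqVneq v s) => [-> S -> //| vs].
  by have [] := conn _ _ vO sO vs.
case Eu: (M m k s u) => [S|].
  have [wS | [S' Ew uS']] := M_separate (lam _ uO) (lam _ wO) Eu neq.
    by left; exists S.
  by right; exists S'.
case Ew: (M m k s w) => [S'|]; last by rewrite Eu Ew in neq.
right; exists S'; split => //; apply/negP => uS'.
have [T Eu' _] := M_Some_mem (lam _ uO) Ew uS'.
by rewrite Eu in Eu'.
Qed.
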